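(* Let $B$ be a BDD and let $B^r$ be the reduced BDD for the same variable ordering with $X_{B^r}=X_B$ (so $|N^r_i|\le|N_i|$ for each layer $i$). Then the projection of $\mathcal{F}^{cap}(B^r)$ onto the $x$-variables is contained in the projection of $\mathcal{F}^{cap}(B)$ onto the $x$-variables.
   Context: A binary decision diagram (BDD) $B=(N,A)$ is a directed acyclic multigraph whose node set is partitioned into layers $N_1,\dots,N_{n+1}$ with $N_1=\{r\}$, $N_{n+1}=\{t\}$; every arc $a$ goes from $s(a)\in N_i$ to $t(a)\in N_{i+1}$ for some $i\in I=\{1,\dots,n\}$ and has label $v_a\in\{0,1\}$, each node having at most one outgoing arc of each label; layer $i$ corresponds to variable $x_i$. $X_B\subseteq\{0,1\}^n$ is the set of label vectors of $r$–$t$ paths. A BDD is reduced if it has the minimum number of nodes among all BDDs (with this layer/variable ordering) representing the same set; it is unique and obtained from any BDD for the set by merging equivalent nodes. $\mathcal{F}^{cap}(B)$ is the set of $(x,y)\in[0,1]^n\times\mathbb{R}^{|A|}_{\ge0}$ satisfying flow conservation $\sum_{a\in\delta^+(u)}y_a=\sum_{a\in\delta^-(u)}y_a$ for $u\in N\setminus\{r,t\}$, $\sum_{a\in\delta^+(r)}y_a=\sum_{a\in\delta^-(t)}y_a=1$, $y_a\le x_i$ for every arc $a$ with $s(a)\in N_i$, $v_a=1$, and $y_a\le1-x_i$ for every arc $a$ with $s(a)\in N_i$, $v_a=0$. *)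

From HB Require Import structures.
From mathcomp Require Import all_boot all_order all_algebra.
Set Implicit Arguments. Unset Strict Implicit. Unset Printing Implicit Defensive.
Import Order.TTheory GRing.Theory Num.Theory.
Local Open Scope ring_scope.

(* Layers are 0-indexed: layer 0 = {root},
   layer n = {term}; an arc leaving layer i (i < n) corresponds to variable x_i
   (x : 'I_n -> _). Arcs form a finite type (multigraph). *)
Record bdd (n : nat) := BDD {
  node : finType;
  arc : finType;
  layer : node -> nat;
  src : arc -> node;
  tgt : arc -> node;
  lab : arc -> bool;
  root : node;
  term : node }.
Arguments node {n} b.
Arguments arc {n} b.
Arguments layer {n} b _.
Arguments src {n} b _.
Arguments tgt {n} b _.
Arguments lab {n} b _.
Arguments root {n} b.
Arguments term {n} b.

Definition bdd_wf n (B : bdd n) : Prop :=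
  [/\ layer B (root B) = 0%N /\ (forall u, layer B u = 0%N -> u = root B),
      layer B (term B) = n /\ (forall u, layer B u = n -> u = term B),
      (forall u, (layer B u <= n)%N),
      (forall a, (layer B (src B a) < n)%N /\
                 layer B (tgt B a) = (layer B (src B a)).+1)
    & (forall a b, src B a = src B b -> lab B a = lab B b -> a = b)].

Definition bdd_set n (B : bdd n) (v : 'I_n -> bool) : Prop :=
  exists p : 'I_n -> arc B,
    (forall i, layer B (src B (p i)) = i /\ lab B (p i) = v i) /\
    (forall i j : 'I_n, nat_of_ord j = (nat_of_ord i).+1 -> tgt B (p i) = src B (p j)).

Definition bdd_reduced n (B : bdd n) : Prop :=
  forall B' : bdd n, bdd_wf B' ->
    (forall v, bdd_set B' v <-> bdd_set B v) -> (#|node B| <= #|node B'|)%N.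

Definition Fcap (R : realFieldType) n (B : bdd n) (x : 'I_n -> R) (y : arc B -> R) : Prop :=
  [/\ (forall i, 0 <= x i <= 1),
      (forall a, 0 <= y a),
      (forall u, u != root B -> u != term B ->
         \sum_(a | src B a == u) y a = \sum_(a | tgt B a == u) y a),
      \sum_(a | src B a == root B) y a = 1 /\ \sum_(a | tgt B a == term B) y a = 1
    & (forall (a : arc B) (i : 'I_n), layer B (src B a) = i ->
         if lab B a then y a <= x i else y a <= 1 - x i)].

Arguments Fcap {R n} B x y.

Definition projx (R : realFieldType) n (B : bdd n) (x : 'I_n -> R) : Prop :=
  exists y : arc B -> R, Fcap B x y.
Arguments projx {R n} B x.
Arguments bdd_set {n} B v.
Arguments bdd_wf {n} B.
Arguments bdd_reduced {n} B.

From HB Require Import structures.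
From mathcomp Require Import all_boot all_order all_algebra.
From mathcomp Require Import zify.
Set Implicit Arguments. Unset Strict Implicit. Unset Printing Implicit Defensive.
Import Order.TTheory GRing.Theory Num.Theory.

(* Because [Br] is reduced, if two accepting paths of [B] meet at a node, then
   the paths of [Br] with the same labels meet at that layer too: two distinct
   [Br]-nodes reached this way would have the same sets of suffixes, and merging
   them would give a smaller BDD for the same set.  Hence every arc of [B] on an
   accepting path corresponds to a unique arc of [Br], with the same label and
   layer.  Decomposing a flow of [Br] into path flows and routing each path
   through its twin path in [B] gives a flow of [B] whose value on each arc is
   at most the flow on the corresponding arc of [Br], so the capacity
   constraints carry over. *)

Section WellFormed.
Variables (n : nat) (C : bdd n).
Hypothesis wf : bdd_wf C.

Lemma layer_root : layer C (root C) = 0%N.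
Proof. by case: wf => [[]]. Qed.

Lemma layer0_root u : layer C u = 0%N -> u = root C.
Proof. by case: wf => [[_ h]] *; apply: h. Qed.

Lemma layer_term : layer C (term C) = n.
Proof. by case: wf => _ []. Qed.

Lemma layern_term u : layer C u = n -> u = term C.
Proof. by case: wf => _ [_ h] *; apply: h. Qed.

Lemma layer_le u : (layer C u <= n)%N.
Proof. by case: wf. Qed.

Lemma layer_src_lt a : (layer C (src C a) < n)%N.
Proof. by case: wf => _ _ _ /(_ a) []. Qed.

Lemma layer_tgt a : layer C (tgt C a) = (layer C (src C a)).+1.
Proof. by case: wf => _ _ _ /(_ a) []. Qed.

Lemma arc_det a b : src C a = src C b -> lab C a = lab C b -> a = b.
Proof. by case: wf => _ _ _ _; apply. Qed.

End WellFormed.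

Section FullPaths.
Variables (n : nat) (C : bdd n).

Definition full_path (p : 'I_n -> arc C) : Prop :=
  (forall i, layer C (src C (p i)) = i) /\
  (forall i j : 'I_n, j = i.+1 :> nat -> tgt C (p i) = src C (p j)).

Lemma bdd_setP v :
  bdd_set C v <-> exists2 p, full_path p & forall i, lab C (p i) = v i.
Proof.
split=> [[p [pv pl]]|[p [pl pt] pv]]; last by exists p.
by exists p => [|i]; [split=> // i; case: (pv i) | case: (pv i)].
Qed.

Definition splice (p p' : 'I_n -> arc C) (i : nat) (j : 'I_n) : arc C :=
  if (j < i)%N then p j else p' j.

Lemma lab_splice p p' i j :
  lab C (splice p p' i j) = if (j < i)%N then lab C (p j) else lab C (p' j).
Proof. by rewrite /splice; case: ifP. Qed.

Lemma splice_full_path (p p' : 'I_n -> arc C) (i : nat) :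
  (forall j, layer C (src C (p j)) = j) -> (forall j, layer C (src C (p' j)) = j) ->
  (forall j k : 'I_n, k = j.+1 :> nat -> (k < i)%N -> tgt C (p j) = src C (p k)) ->
  (forall j k : 'I_n, k = j.+1 :> nat -> (i <= j)%N -> tgt C (p' j) = src C (p' k)) ->
  (forall j k : 'I_n, k = j.+1 :> nat -> k = i :> nat -> tgt C (p j) = src C (p' k)) ->
  full_path (splice p p' i).
Proof.
move=> pl p'l pt p't junction; split=> [j|j k kj]; rewrite /splice.
  by case: ifP.
case: (ltnP k i) => ki; first by rewrite ifT; [apply: pt | lia].
case: (ltnP j i) => ji; last exact: p't.
by apply: junction; lia.
Qed.

Lemma splice_full_path_at p p' (i : 'I_n) :
  full_path p -> full_path p' -> src C (p i) = src C (p' i) ->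
  full_path (splice p p' i).
Proof.
move=> [pl pt] [p'l p't] e; apply: splice_full_path => // j k kj ki.
- exact: pt.
- exact: p't.
by rewrite (pt j k kj) (_ : k = i) //; apply: val_inj.
Qed.

Hypothesis wf : bdd_wf C.

Lemma full_path_src_eq p p' (i : 'I_n) :
  full_path p -> full_path p' ->
  (forall k : 'I_n, (k < i)%N -> lab C (p k) = lab C (p' k)) ->
  src C (p i) = src C (p' i).
Proof.
move=> [pl pt] [p'l p't]; move Hm: (nat_of_ord i) => m.
elim: m i Hm => [|m IH] i im lp.
  by rewrite (layer0_root wf (etrans (pl i) im)) (layer0_root wf (etrans (p'l i) im)).
have mn : (m < n)%N by have := ltn_ord i; lia.
have pm : p (Ordinal mn) = p' (Ordinal mn).
  apply: (arc_det wf); last by apply: lp; rewrite /=; lia.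
  by apply: IH => // k km; apply: lp; lia.
by rewrite -(pt (Ordinal mn)) ?im // -(p't (Ordinal mn)) ?im // pm.
Qed.

End FullPaths.

Lemma equiv_full_path n (C D : bdd n) (p : 'I_n -> arc C) :
  (forall v, bdd_set C v <-> bdd_set D v) -> full_path p ->
  exists2 q : 'I_n -> arc D, full_path q & forall j, lab D (q j) = lab C (p j).
Proof. by move=> CD fp; apply/bdd_setP/CD/bdd_setP; exists p. Qed.

Section Merge.
Variables (n : nat) (C : bdd n) (s1 s2 : node C) (i : 'I_n).
Hypotheses (wf : bdd_wf C) (s12 : s1 != s2).
Hypotheses (ls1 : layer C s1 = i) (ls2 : layer C s2 = i).

Definition suffix_swap (s s' : node C) : Prop :=
  forall P, full_path P -> src C (P i) = s ->
  exists2 P', full_path P' &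
    src C (P' i) = s' /\ forall j : 'I_n, (i <= j)%N -> lab C (P' j) = lab C (P j).

Definition on_full_path (s : node C) : Prop :=
  exists2 P, full_path P & src C (P i) = s.

(* The BDD obtained by deleting [s2] and redirecting its incoming arcs to [s1]. *)
Definition merge_node := {u : node C | u != s2}.
Definition merge_arc := {a : arc C | src C a != s2}.
Definition redirect (u : node C) : merge_node := insubd (exist _ s1 s12) u.

Definition merge_bdd : bdd n := @BDD n merge_node merge_arc
  (fun u => layer C (val u))
  (fun a => redirect (src C (val a))) (fun a => redirect (tgt C (val a)))
  (fun a => lab C (val a))
  (redirect (root C)) (redirect (term C)).

Lemma val_redirect u : val (redirect u) = if u != s2 then u else s1.
Proof. exact: val_insubd. Qed.

Lemma redirect_id u : u != s2 -> val (redirect u) = u.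
Proof. by rewrite val_redirect => ->. Qed.

Lemma redirect_s2 : redirect s2 = redirect s1.
Proof. by apply: val_inj; rewrite val_redirect eqxx redirect_id. Qed.

Lemma layer_neq_s2 u : layer C u != i -> u != s2.
Proof. by apply: contra => /eqP ->; rewrite ls2. Qed.

Lemma root_neq_s2 : root C != s2.
Proof.
apply/eqP => r2; move/eqP: s12; apply; rewrite -r2.
by apply: (layer0_root wf); rewrite ls1 -ls2 -r2 (layer_root wf).
Qed.

Lemma term_neq_s2 : term C != s2.
Proof. by apply: layer_neq_s2; rewrite (layer_term wf) neq_ltn ltn_ord orbT. Qed.

Lemma merge_wf : bdd_wf merge_bdd.
Proof.
split=> /=.
- rewrite redirect_id ?root_neq_s2 ?(layer_root wf) //; split=> // u u0.
  by apply: val_inj; rewrite redirect_id ?root_neq_s2 //; apply: (layer0_root wf).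
- rewrite redirect_id ?term_neq_s2 ?(layer_term wf) //; split=> // u un.
  by apply: val_inj; rewrite redirect_id ?term_neq_s2 //; apply: (layern_term wf).
- by move=> u; apply: (layer_le wf).
- move=> [a a2] /=; rewrite !val_redirect a2 (layer_src_lt wf); split=> //.
  by rewrite -(layer_tgt wf); case: eqVneq => // ->; rewrite ls1 ls2.
move=> [a a2] [b b2] /= ab lab_ab; apply: val_inj; apply: (arc_det wf) => //.
by rewrite -(redirect_id a2) -(redirect_id b2) ab.
Qed.

Lemma merge_card : (#|node merge_bdd| < #|node C|)%N.
Proof.
rewrite /= card_sig.
have -> : #|[pred u | u != s2]| = #|predC1 s2| by apply: eq_card.
by rewrite cardC1 prednK //; apply/card_gt0P; exists s2.
Qed.

Lemma merge_lift (Q : 'I_n -> arc C) :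
  (forall j, layer C (src C (Q j)) = j) -> src C (Q i) != s2 ->
  (forall j k : 'I_n, k = j.+1 :> nat ->
     redirect (tgt C (Q j)) = redirect (src C (Q k))) ->
  exists2 Q' : 'I_n -> arc merge_bdd, full_path Q' & forall j, val (Q' j) = Q j.
Proof.
move=> Ql Qi2 Qt.
have Q2 j : src C (Q j) != s2.
  by case: (eqVneq j i) => [-> //|ji]; apply: layer_neq_s2; rewrite Ql.
exists (fun j => exist _ (Q j) (Q2 j) : merge_arc) => //.
by split=> [j|]; [rewrite /= redirect_id | apply: Qt].
Qed.

Lemma merge_path_layer (Q : 'I_n -> arc merge_bdd) j :
  full_path Q -> layer C (src C (val (Q j))) = j.
Proof. by case=> /(_ j); rewrite /= redirect_id // (valP (Q j)). Qed.

Lemma merge_link (Q : 'I_n -> arc merge_bdd) (j k : 'I_n) :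
  full_path Q -> k = j.+1 :> nat -> tgt C (val (Q j)) != s2 ->
  tgt C (val (Q j)) = src C (val (Q k)).
Proof.
move=> [Ql Qt] kj tj2; have := f_equal val (Qt j k kj).
by rewrite /= !redirect_id ?(valP (Q k)).
Qed.

Lemma merge_link_s2 (Q : 'I_n -> arc merge_bdd) (j k : 'I_n) :
  full_path Q -> k = j.+1 :> nat -> tgt C (val (Q j)) = s2 -> src C (val (Q k)) = s1.
Proof.
move=> [_ Qt] kj tj2; have := f_equal val (Qt j k kj).
by rewrite /= tj2 val_redirect eqxx redirect_id // (valP (Q k)).
Qed.

Lemma set_merge v : suffix_swap s2 s1 -> bdd_set C v -> bdd_set merge_bdd v.
Proof.
move=> swap /bdd_setP [P fP Pv].
suff [Q [Ql Qi Qt QP]] : exists Q : 'I_n -> arc C,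
    [/\ forall j, layer C (src C (Q j)) = j, src C (Q i) != s2,
        forall j k : 'I_n, k = j.+1 :> nat ->
          redirect (tgt C (Q j)) = redirect (src C (Q k))
      & forall j, lab C (Q j) = lab C (P j)].
  have [Q' fQ' Q'Q] := merge_lift Ql Qi Qt.
  by apply/bdd_setP; exists Q' => // j; rewrite /= Q'Q QP.
have [Pi2|Pi2] := eqVneq (src C (P i)) s2; last first.
  by exists P; split=> // [|j k kj]; [case: fP | rewrite (fP.2 j k kj)].
have [P' [P'l P't] [P'i P'P]] := swap _ fP Pi2.
exists (splice P P' i); split.
- by move=> j; rewrite /splice; case: ifP => _; [case: fP|].
- by rewrite /splice ltnn P'i.
- move=> j k kj; rewrite /splice.
  case: (ltnP k i) => ki; first by rewrite ifT ?(fP.2 j k kj) //; lia.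
  case: (ltnP j i) => ji; last by rewrite (P't j k kj).
  have ik : k = i by apply: ord_inj; lia.
  by rewrite (fP.2 j k kj) ik Pi2 P'i redirect_s2.
- by move=> j; rewrite lab_splice; case: ltnP => // ij; rewrite P'P.
Qed.

Lemma merge_set v : suffix_swap s1 s2 -> on_full_path s1 ->
  bdd_set merge_bdd v -> bdd_set C v.
Proof.
move=> swap [p fp ps1] /bdd_setP [Q fQ Qv].
set R := fun j => val (Q j).
have Rl j : layer C (src C (R j)) = j := merge_path_layer j fQ.
have Rt (j k : 'I_n) : k = j.+1 :> nat -> k != i :> nat -> tgt C (R j) = src C (R k).
  move=> kj ki; apply: (merge_link fQ kj); apply: layer_neq_s2.
  by rewrite (layer_tgt wf) Rl -kj.
have [|] := boolP [exists j, tgt C (R j) == s2]; last first.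
  rewrite negb_exists => /forallP Rt2.
  apply/bdd_setP; exists R => //; split=> [|j k kj]; first exact: Rl.
  exact: (merge_link fQ kj (Rt2 j)).
case/existsP=> im /eqP Rim.
have ij : i = im.+1 :> nat by rewrite -ls2 -Rim (layer_tgt wf) Rl.
have Ri : src C (R i) = s1 := merge_link_s2 fQ ij Rim.
have fpR : full_path (splice p R i).
  apply: splice_full_path => //; first by case: fp.
  - by move=> j k kj _; apply: fp.2.
  - by move=> j k kj ij'; apply: Rt => //; lia.
  by move=> j k kj ki; rewrite (fp.2 j k kj) (_ : k = i) ?ps1 ?Ri //; apply: ord_inj.
have spRi : src C (splice p R i i) = s1 by rewrite /splice ltnn.
have [P' fP' [P'i P'R]] := swap _ fpR spRi.
apply/bdd_setP; exists (splice R P' i).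
  apply: splice_full_path => //; first by case: fP'.
  - by move=> j k kj ki; apply: Rt => //; lia.
  - by move=> j k kj _; apply: fP'.2.
  move=> j k kj ki; have ji : j = im by apply: ord_inj; lia.
  by rewrite ji Rim (_ : k = i) ?P'i //; apply: ord_inj.
move=> j; rewrite lab_splice; case: ltnP => ij'; first exact: Qv.
by rewrite P'R // lab_splice ltnNge ij' /=; apply: Qv.
Qed.

End Merge.

Lemma merge_smaller n (C : bdd n) (s1 s2 : node C) (i : 'I_n) :
  bdd_wf C -> s1 != s2 -> layer C s1 = i -> layer C s2 = i ->
  suffix_swap i s1 s2 -> suffix_swap i s2 s1 -> on_full_path i s1 ->
  exists2 C' : bdd n, bdd_wf C' &
    (forall v, bdd_set C' v <-> bdd_set C v) /\ (#|node C'| < #|node C|)%N.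
Proof.
move=> wf s12 ls1 ls2 swap12 swap21 s1_on.
exists (merge_bdd s12); first exact: merge_wf wf s12 ls1 ls2.
split=> [v|]; last exact: merge_card.
split; [exact: merge_set swap12 s1_on | exact: set_merge swap21].
Qed.

Section Reduced.
Variables (n : nat) (B Br : bdd n).
Hypotheses (wfB : bdd_wf B) (wfR : bdd_wf Br).
Hypothesis BrB : forall v, bdd_set Br v <-> bdd_set B v.

Definition twin (p : 'I_n -> arc Br) (q : 'I_n -> arc B) : Prop :=
  [/\ full_path p, full_path q & forall j, lab Br (p j) = lab B (q j)].

Lemma twin_suffix_swap p q p2 q2 (i : 'I_n) :
  twin p q -> twin p2 q2 -> src B (q i) = src B (q2 i) ->
  suffix_swap i (src Br (p i)) (src Br (p2 i)).
Proof.
move=> [fp fq pq] [fp2 fq2 pq2] qq2 P fP Pi.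
have fpP : full_path (splice p P i) by apply: splice_full_path_at.
have [q' fq' q'pP] := equiv_full_path BrB fpP.
have q'q : src B (q' i) = src B (q2 i).
  by rewrite -qq2; apply: full_path_src_eq => // k ki; rewrite q'pP lab_splice ki pq.
have [P' fP' P'q] := equiv_full_path (fun v => iff_sym (BrB v))
  (splice_full_path_at fq2 fq' (esym q'q)).
exists P' => //; split.
  by apply: full_path_src_eq => // k ki; rewrite P'q lab_splice ki pq2.
by move=> j ij; rewrite P'q lab_splice ltnNge ij q'pP lab_splice ltnNge ij.
Qed.

Hypothesis red : bdd_reduced Br.

Lemma twin_src_eq p q p2 q2 (i : 'I_n) :
  twin p q -> twin p2 q2 -> src B (q i) = src B (q2 i) -> src Br (p i) = src Br (p2 i).
Proof.
move=> tw tw2 qq2; case: (eqVneq (src Br (p i)) (src Br (p2 i))) => // pp2.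
case: (tw) (tw2) => fp _ _ [fp2 _ _].
have [C' wfC' [C'Br C'lt]] := merge_smaller wfR pp2 (fp.1 i) (fp2.1 i)
  (twin_suffix_swap tw tw2 qq2) (twin_suffix_swap tw2 tw (esym qq2))
  (ex_intro2 _ _ p fp erefl).
by move: (red wfC' C'Br); rewrite leqNgt C'lt.
Qed.

Definition corr (a : arc B) (a' : arc Br) : Prop :=
  exists p q (i : 'I_n), [/\ twin p q, q i = a & p i = a'].

Lemma corr_lab a a' : corr a a' -> lab B a = lab Br a'.
Proof. by case=> p [q [i [[_ _ pq] <- <-]]]. Qed.

Lemma corr_layer a a' : corr a a' -> layer B (src B a) = layer Br (src Br a').
Proof. by case=> p [q [i [[[pl _] [ql _] _] <- <-]]]; rewrite pl ql. Qed.

Lemma corr_functional a a' a'' : corr a a' -> corr a a'' -> a' = a''.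
Proof.
move=> [p [q [i [tw qa <-]]]] [p2 [q2 [i2 [tw2 q2a <-]]]].
have ii2 : i2 = i.
  case: (tw) (tw2) => _ [ql _] _ [_ [q2l _] _].
  by apply: ord_inj; rewrite -(ql i) -(q2l i2) qa q2a.
subst i2; apply: (arc_det wfR).
  by apply: twin_src_eq tw tw2 _; rewrite qa q2a.
by case: tw tw2 => _ _ -> [_ _ ->]; rewrite qa q2a.
Qed.

End Reduced.

Section Flows.
Local Open Scope ring_scope.
Variables (R : realFieldType) (n : nat) (C : bdd n).

Definition outflow (y : arc C -> R) u := \sum_(a | src C a == u) y a.
Definition inflow (y : arc C -> R) u := \sum_(a | tgt C a == u) y a.

Definition is_flow (y : arc C -> R) (c : R) : Prop :=
  [/\ forall a, 0 <= y a,
      forall u, u != root C -> u != term C -> outflow y u = inflow y u,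
      outflow y (root C) = c & inflow y (term C) = c].

Lemma is_flow0 : is_flow (fun=> 0) 0.
Proof. by split=> // [u _ _||]; rewrite /outflow /inflow ?big1. Qed.

Lemma flow_value_ge0 (y : arc C -> R) c : is_flow y c -> 0 <= c.
Proof. by case=> y0 _ <- _; apply: sumr_ge0. Qed.

Lemma flow_out_witness (y : arc C -> R) c u :
  is_flow y c -> 0 < outflow y u -> exists a, (src C a == u) && (0 < y a).
Proof. by case=> y0 _ _ _ /lt0r_neq0 /eqP; apply: psumr_neq0P. Qed.

Lemma is_flow_comb y z c d (m : R) :
  is_flow y c -> is_flow z d -> (forall a, 0 <= y a + m * z a) ->
  is_flow (fun a => y a + m * z a) (c + m * d).
Proof.
have sumE (p : pred (arc C)) (f g : arc C -> R) :
    \sum_(a | p a) (f a + m * g a) = \sum_(a | p a) f a + m * \sum_(a | p a) g a.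
  by rewrite big_split /= mulr_sumr.
move=> [_ ycons yr yt] [_ zcons zr zt] ge0; split=> // [u ur ut||].
- by rewrite /outflow /inflow !sumE -/(outflow y u) -/(outflow z u) ycons ?zcons.
- by rewrite /outflow sumE -/(outflow y _) -/(outflow z _) yr zr.
by rewrite /inflow sumE -/(inflow y _) -/(inflow z _) yt zt.
Qed.

Definition path_flow (P : 'I_n -> arc C) (a : arc C) : R := \sum_i (P i == a)%:R.

Lemma sum_indicator (T : finType) (F : pred T) (t0 : T) :
  (forall t, F t -> t = t0) -> \sum_t (F t)%:R = (F t0)%:R :> R.
Proof.
move=> F1; rewrite (bigD1 t0) //= big1 ?addr0 // => t t0t.
by case: (boolP (F t)) => // /F1 tt0; rewrite tt0 eqxx in t0t.
Qed.

Lemma path_flow_sum (f : arc C -> node C) P u :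
  \sum_(a | f a == u) path_flow P a = \sum_i (f (P i) == u)%:R.
Proof.
rewrite exchange_big /=; apply: eq_bigr => i _.
have [fPi|fPi] := eqVneq (f (P i)) u.
  rewrite (bigD1 (P i)) ?fPi //= eqxx big1 ?addr0 // => a /andP [_ aPi].
  by rewrite eq_sym (negbTE aPi).
by rewrite big1 // => a /eqP fa; case: eqP => // Pia; rewrite Pia fa eqxx in fPi.
Qed.

Lemma path_flowE P a : full_path P -> path_flow P a = (a \in codom P)%:R.
Proof.
move=> [Pl _]; case: codomP => [[i ->]|Pa].
  rewrite /path_flow (sum_indicator (t0 := i)) ?eqxx // => j /eqP Pji.
  by apply: ord_inj; rewrite -(Pl i) -(Pl j) Pji.
by rewrite /path_flow big1 // => i _; case: eqP => // Pia; case: Pa; exists i.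
Qed.

Lemma path_flow01 P a : full_path P ->
  path_flow P a = 0 \/ path_flow P a = 1 /\ exists i, a = P i.
Proof.
by move=> fP; rewrite (path_flowE a fP); case: codomP => ?; [right | left].
Qed.

Hypothesis wf : bdd_wf C.

Lemma path_flow_is_flow P : (0 < n)%N -> full_path P -> is_flow (path_flow P) 1.
Proof.
move=> n0 [Pl Pt]; have at_layer (f : arc C -> node C) u (i0 : 'I_n) :
    (forall i, f (P i) == u -> i = i0) ->
    \sum_i ((f (P i) == u)%:R : R) = (f (P i0) == u)%:R.
  exact: sum_indicator.
split=> [a|u ur ut||]; rewrite /outflow /inflow ?path_flow_sum.
- by apply: sumr_ge0 => i _; apply: ler0n.
- have lu0 : layer C u != 0%N by apply: contra ur => /eqP /(layer0_root wf) ->.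
  have lun : layer C u != n by apply: contra ut => /eqP /(layern_term wf) ->.
  have ltu : (layer C u < n)%N by rewrite ltn_neqAle lun (layer_le wf).
  have ltu1 : ((layer C u).-1 < n)%N by apply: leq_ltn_trans ltu; apply: leq_pred.
  rewrite (at_layer _ _ (Ordinal ltu)) => [|i /eqP Piu]; last first.
    by apply: ord_inj; rewrite /= -Piu Pl.
  rewrite (at_layer _ _ (Ordinal ltu1)) => [|i /eqP Piu]; last first.
    by apply: ord_inj; rewrite /= -Piu (layer_tgt wf) Pl.
  by rewrite (Pt (Ordinal ltu1) (Ordinal ltu)) //= prednK // lt0n.
- rewrite (at_layer _ _ (Ordinal n0)) => [|i /eqP ri]; last first.
    by apply: ord_inj; rewrite -(Pl i) ri (layer_root wf).
  by rewrite (layer0_root wf (Pl (Ordinal n0))) eqxx.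
have n1 : (n.-1 < n)%N by rewrite prednK.
rewrite (at_layer _ _ (Ordinal n1)) => [|i /eqP ti]; last first.
  apply: ord_inj; apply: succn_inj.
  by rewrite /= prednK // -(Pl i) -(layer_tgt wf) ti (layer_term wf).
have tn1 : layer C (tgt C (P (Ordinal n1))) = n by rewrite (layer_tgt wf) Pl /= prednK.
by rewrite (layern_term wf tn1) eqxx.
Qed.

End Flows.

Arguments path_flowE R {n C P} a _.
Arguments path_flow01 R {n C P} a _.

Section PositivePath.
Local Open Scope ring_scope.
Variables (R : realFieldType) (n : nat) (C : bdd n) (y : arc C -> R) (c : R).
Hypotheses (wf : bdd_wf C) (fy : is_flow y c) (c_pos : 0 < c).

Lemma root_arc_pos : exists a, (src C a == root C) && (0 < y a).
Proof. by apply: flow_out_witness fy _; case: fy => _ _ ->. Qed.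

Lemma flow_dim_pos : (0 < n)%N.
Proof.
have [a /andP [/eqP ar _]] := root_arc_pos.
by have := layer_src_lt wf a; rewrite ar (layer_root wf).
Qed.

Definition next_arc (a : arc C) : arc C :=
  odflt a [pick b | (src C b == tgt C a) && (0 < y b)].

Lemma next_arc_pos a : 0 < y a -> ((layer C (src C a)).+1 < n)%N ->
  0 < y (next_arc a) /\ src C (next_arc a) = tgt C a.
Proof.
move=> ya la; rewrite /next_arc; case: pickP => [b /andP [/eqP -> ->] //|none].
have tr : tgt C a != root C.
  by apply: contraTneq isT => ar; have := layer_tgt wf a; rewrite ar (layer_root wf).
have tt : tgt C a != term C.
  by apply: contraTneq la => at_; rewrite -(layer_tgt wf) at_ (layer_term wf) ltnn.
have [b /andP [ba yb]] : exists b, (src C b == tgt C a) && (0 < y b).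
  apply: flow_out_witness fy _; case: fy => y0 cons _ _; rewrite cons //.
  apply: lt_le_trans ya _; rewrite /inflow (bigD1 a) //= lerDl.
  by apply: sumr_ge0 => ? _; apply: y0.
by move: (none b); rewrite /= ba yb.
Qed.

(* Follow positive arcs forward from the root; conservation at inner nodes
   guarantees a positive continuation. *)
Lemma positive_full_path : exists2 P, full_path P & forall i, 0 < y (P i).
Proof.
have [a0 /andP [/eqP a0r ya0]] := root_arc_pos.
have walk m : (m < n)%N ->
    0 < y (iter m next_arc a0) /\ layer C (src C (iter m next_arc a0)) = m.
  elim: m => [_|m IH mn]; first by rewrite /= a0r (layer_root wf).
  have [ym lm] := IH (ltnW mn).
  have lmn : ((layer C (src C (iter m next_arc a0))).+1 < n)%N by rewrite lm.
  have [yS sS] := next_arc_pos ym lmn.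
  by rewrite /= yS sS (layer_tgt wf) lm.
exists (fun i : 'I_n => iter i next_arc a0) => [|i]; last exact: (walk _ (ltn_ord i)).1.
split=> [i|i j ji]; first exact: (walk _ (ltn_ord i)).2.
have [yi li] := walk _ (ltn_ord i).
by rewrite ji iterS (next_arc_pos yi _).2 // li -ji.
Qed.

End PositivePath.

Lemma card_support_lt (R : numDomainType) (T : finType) (f g : T -> R) (t0 : T) :
  (forall t, 0 <= f t <= g t)%R -> f t0 = 0%R -> g t0 != 0%R ->
  (#|[pred t | f t != 0%R]| < #|[pred t | g t != 0%R]|)%N.
Proof.
move=> fg ft0 gt0; apply: proper_card; apply/properP; split.
  apply/subsetP => t; rewrite !inE; apply: contra => /eqP gt.
  by have /andP [f0 fg0] := fg t; rewrite eq_le f0 -gt fg0.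
by exists t0; rewrite !inE ?ft0 ?eqxx.
Qed.

Section Transfer.
Local Open Scope ring_scope.
Variables (R : realFieldType) (n : nat) (B Br : bdd n).
Hypotheses (wfB : bdd_wf B) (wfR : bdd_wf Br).
Hypothesis BrB : forall v, bdd_set Br v <-> bdd_set B v.
Hypothesis red : bdd_reduced Br.

Definition dominated (y : arc B -> R) (yr : arc Br -> R) : Prop :=
  forall a, y a = 0 \/ exists2 a', corr a a' & y a <= yr a'.

Lemma dominated_add_path y yr P Q (mu : R) :
  twin P Q -> 0 <= mu -> (forall i, mu <= yr (P i)) ->
  dominated y (fun a => yr a + - mu * path_flow R P a) ->
  dominated (fun a => y a + mu * path_flow R Q a) yr.
Proof.
move=> tw mu0 mu_min dom a; case: (tw) => fP fQ _.
have yr1_le a' : yr a' + - mu * path_flow R P a' <= yr a'.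
  by rewrite mulNr lerBlDr lerDl mulr_ge0 //; case: (path_flow01 R a' fP) => [|[]] ->.
case: (path_flow01 R a fQ) => [->|[-> [i ai]]].
  rewrite mulr0 addr0; case: (dom a) => [|[a' aa' ya]]; first by left.
  by right; exists a' => //; apply: le_trans ya (yr1_le a').
have aPi : corr a (P i) by exists P, Q, i; split.
right; exists (P i) => //; rewrite mulr1.
case: (dom a) => [->|[a' aa' ya]]; first by rewrite add0r.
move: ya; rewrite -(corr_functional wfB wfR BrB red aPi aa') (path_flowE R _ fP) codom_f.
by rewrite mulr1 -lerBrDr.
Qed.

(* Peel off a positive path of [Br] at its bottleneck value and replay it along
   the twin path of [B]. *)
Lemma flow_transfer yr c :
  is_flow yr c -> exists2 y, is_flow y c & dominated y yr.
Proof.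
have [k] := ubnP #|[pred a | yr a != 0]|; elim: k yr c => // k IH yr c supp fyr.
have [c0|cn0] := eqVneq c 0.
  by exists (fun=> 0); [rewrite c0; apply: is_flow0 | left].
have c_pos : 0 < c by rewrite lt0r cn0 (flow_value_ge0 fyr).
have n0 := flow_dim_pos wfR fyr c_pos.
have [P fP Ppos] := positive_full_path wfR fyr c_pos.
have [im _ Pmin] := @arg_minP _ R _ (Ordinal n0) predT (fun i => yr (P i)) isT.
set mu := yr (P im).
have mu_min i : mu <= yr (P i) by apply: Pmin.
have yr1_ge0 a : 0 <= yr a + - mu * path_flow R P a.
  case: (path_flow01 R a fP) => [->|[-> [i ->]]]; last by rewrite mulr1 subr_ge0.
  by rewrite mulr0 addr0; case: fyr.
have fyr1 := is_flow_comb fyr (path_flow_is_flow R wfR n0 fP) yr1_ge0.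
have supp1 : (#|[pred a | (yr a + - mu * path_flow R P a != 0)%R]| < k)%N.
  rewrite ltnS in supp; apply: leq_trans supp.
  apply: (card_support_lt (t0 := P im)) => [a||].
  - rewrite yr1_ge0 mulNr lerBlDr lerDl mulr_ge0 ?(ltW (Ppos im)) //.
    by case: (path_flow01 R a fP) => [|[]] ->.
  - by rewrite (path_flowE R _ fP) codom_f mulr1 addrN.
  - exact: lt0r_neq0.
have [y1 fy1 dom1] := IH _ _ supp1 fyr1.
have [Q fQ QP] := equiv_full_path BrB fP.
have twPQ : twin P Q by split=> // j; rewrite QP.
exists (fun a => y1 a + mu * path_flow R Q a); last first.
  exact: dominated_add_path twPQ (ltW (Ppos im)) mu_min dom1.
have := is_flow_comb (m := mu) fy1 (path_flow_is_flow R wfB n0 fQ).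
rewrite !mulr1 subrK; apply=> a.
rewrite addr_ge0 ?mulr_ge0 ?(ltW (Ppos im)) //; first by case: fy1.
by case: (path_flow01 R a fQ) => [|[]] ->.
Qed.

End Transfer.

Unset Implicit Arguments.

Theorem theorem4 (R : realFieldType) (n : nat) (B Br : bdd n) :
  bdd_wf B -> bdd_wf Br -> bdd_reduced Br ->
  (forall v, bdd_set Br v <-> bdd_set B v) ->
  forall x : 'I_n -> R, projx Br x -> projx B x.
Proof.
move=> wfB wfR red BrB x [yr [x01 yr0 yr_cons [yr_root yr_term] yr_cap]].
have [y [y0 y_cons y_root y_term] dom] :=
  flow_transfer wfB wfR BrB red (And4 yr0 yr_cons yr_root yr_term).
exists y; split=> // a i ai.
have /andP [xi0 xi1] := x01 i.
case: (dom a) => [->|[a' aa' ya]]; first by case: (lab B a); rewrite ?subr_ge0.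
have := yr_cap a' i; rewrite -(corr_lab aa') -(corr_layer aa') ai => /(_ erefl).
by case: (lab B a) => /(le_trans ya).
Qed.
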